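(* Every closed ball $B(p,r)$ of $(\mathbb H,d_\alpha)$ is a convex subset of $\mathbb R^3$ in the Euclidean sense.
   Context: $\mathbb H=\mathbb R^3$ with group law $(x,y,z)\cdot(x',y',z')=(x+x',y+y',z+z'+\tfrac12(xy'-yx'))$ and dilations $\delta_\lambda(x,y,z)=(\lambda x,\lambda y,\lambda^2z)$. Fix $\alpha>0$ such that $d_\alpha(p,q)=\inf\{r>0:\delta_{1/r}(p^{-1}\cdot q)\in B_\alpha\}$ is a distance on $\mathbb H$, where $B_\alpha$ is the closed Euclidean ball of radius $\alpha$ centered at $0$. $B(p,r)=\{q:d_\alpha(q,p)\le r\}$. *)

From Stdlib Require Import Reals.
Open Scope R_scope.

Definition pt : Type := (R * R * R)%type.

Definition hmul (p q : pt) : pt :=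
  let '(x, y, z) := p in let '(x', y', z') := q in
  (x + x', y + y', z + z' + / 2 * (x * y' - y * x')).

Definition hinv (p : pt) : pt := let '(x, y, z) := p in (- x, - y, - z).

Definition dil (l : R) (p : pt) : pt :=
  let '(x, y, z) := p in (l * x, l * y, l * l * z).

Definition in_Balpha (alpha : R) (p : pt) : Prop :=
  let '(x, y, z) := p in x * x + y * y + z * z <= alpha * alpha.

Definition Dset (alpha : R) (p q : pt) (r : R) : Prop :=
  r > 0 /\ in_Balpha alpha (dil (/ r) (hmul (hinv p) q)).

Definition is_inf (S : R -> Prop) (m : R) : Prop :=
  (forall r, S r -> m <= r) /\ (forall b, (forall r, S r -> b <= r) -> b <= m).

Definition is_distance (d : pt -> pt -> R) : Prop :=
  (forall p q, 0 <= d p q) /\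
  (forall p q, d p q = 0 <-> p = q) /\
  (forall p q, d p q = d q p) /\
  (forall p q s, d p s <= d p q + d q s).

Definition comb (t : R) (p q : pt) : pt :=
  let '(x, y, z) := p in let '(x', y', z') := q in
  ((1 - t) * x + t * x', (1 - t) * y + t * y', (1 - t) * z + t * z').

Definition euclid_convex (A : pt -> Prop) : Prop :=
  forall p q t, A p -> A q -> 0 <= t <= 1 -> A (comb t p q).

From Stdlib Require Import Reals Lra Psatz Classical.
Open Scope R_scope.

(* Left translations and dilations are affine maps of R^3 and B_alpha is
   Euclidean convex, so for each s > 0 the set {q | dil (/ s) (p^-1 q) \in B_alpha}
   is convex.  These sets increase with s, and the ball B(p, r) is their
   intersection over s > r. *)

Lemma in_Balpha_comb (alpha t : R) (u v : pt) :
  in_Balpha alpha u -> in_Balpha alpha v -> 0 <= t <= 1 ->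
  in_Balpha alpha (comb t u v).
Proof.
  destruct u as [[x y] z], v as [[x' y'] z']; simpl; intros Hu Hv Ht.
  set (D := (x - x') * (x - x') + (y - y') * (y - y') + (z - z') * (z - z')).
  assert (Hsq : ((1 - t) * x + t * x') * ((1 - t) * x + t * x') +
    ((1 - t) * y + t * y') * ((1 - t) * y + t * y') +
    ((1 - t) * z + t * z') * ((1 - t) * z + t * z') =
    (1 - t) * (x * x + y * y + z * z) + t * (x' * x' + y' * y' + z' * z')
    - t * (1 - t) * D) by (unfold D; ring).
  assert (HD : 0 <= D).
  { unfold D; pose proof (Rle_0_sqr (x - x')); pose proof (Rle_0_sqr (y - y'));
    pose proof (Rle_0_sqr (z - z')); unfold Rsqr in *; lra. }
  assert (0 <= t * (1 - t) * D) by (apply Rmult_le_pos; nra).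
  assert ((1 - t) * (x * x + y * y + z * z) <= (1 - t) * (alpha * alpha))
    by (apply Rmult_le_compat_l; lra).
  assert (t * (x' * x' + y' * y' + z' * z') <= t * (alpha * alpha))
    by (apply Rmult_le_compat_l; lra).
  rewrite Hsq; lra.
Qed.

Lemma hmul_comb (p q q' : pt) (t : R) :
  hmul p (comb t q q') = comb t (hmul p q) (hmul p q').
Proof.
  destruct p as [[a b] c], q as [[x y] z], q' as [[x' y'] z']; simpl.
  f_equal; [f_equal|]; ring.
Qed.

Lemma dil_comb (k t : R) (q q' : pt) :
  dil k (comb t q q') = comb t (dil k q) (dil k q').
Proof.
  destruct q as [[x y] z], q' as [[x' y'] z']; simpl.
  f_equal; [f_equal|]; ring.
Qed.

Lemma in_Balpha_dil_le (alpha k k' : R) (w : pt) :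
  0 <= k <= k' -> in_Balpha alpha (dil k' w) -> in_Balpha alpha (dil k w).
Proof.
  destruct w as [[x y] z]; simpl; intros Hk Hw.
  assert (Hk2 : 0 <= k * k <= k' * k') by nra.
  assert (Hk4 : (k * k) * (k * k) <= (k' * k') * (k' * k')) by nra.
  assert (Hx : (k * x) * (k * x) <= (k' * x) * (k' * x)) by nra.
  assert (Hy : (k * y) * (k * y) <= (k' * y) * (k' * y)) by nra.
  assert (Hz : (k * k * z) * (k * k * z) <= (k' * k' * z) * (k' * k' * z)).
  { replace ((k * k * z) * (k * k * z)) with ((k * k) * (k * k) * (z * z)) by ring.
    replace ((k' * k' * z) * (k' * k' * z))
      with ((k' * k') * (k' * k') * (z * z)) by ring.
    apply Rmult_le_compat_r; nra. }
  lra.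
Qed.

Lemma Dset_le (alpha : R) (p q : pt) (s s' : R) :
  Dset alpha p q s -> s <= s' -> Dset alpha p q s'.
Proof.
  intros [Hs HB] Hss'; split; [lra|].
  apply (in_Balpha_dil_le _ _ (/ s)); [|exact HB].
  split; [left; apply Rinv_0_lt_compat; lra | apply Rinv_le_contravar; lra].
Qed.

Lemma Dset_comb (alpha : R) (p q q' : pt) (s t : R) :
  Dset alpha p q s -> Dset alpha p q' s -> 0 <= t <= 1 ->
  Dset alpha p (comb t q q') s.
Proof.
  intros [Hs Hq] [_ Hq'] Ht; split; [exact Hs|].
  rewrite hmul_comb, dil_comb; apply in_Balpha_comb; assumption.
Qed.

Lemma is_inf_upward_lt (S : R -> Prop) (m s : R) :
  is_inf S m -> (forall r r', S r -> r <= r' -> S r') -> m < s -> S s.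
Proof.
  intros [_ Hglb] Hup Hms.
  apply NNPP; intro HnS.
  assert (Hlb : s <= m).
  { apply Hglb; intros r Hr.
    destruct (Rle_or_lt s r) as [Hsr | Hrs]; [exact Hsr|].
    exfalso; apply HnS, (Hup r); [exact Hr | lra]. }
  lra.
Qed.

Lemma Rle_of_forall_gt (x r : R) : (forall s, r < s -> x <= s) -> x <= r.
Proof.
  intro H; apply Rnot_lt_le; intro Hrx.
  specialize (H ((r + x) / 2)); lra.
Qed.

Theorem proposition2p2 (alpha : R) (halpha : alpha > 0)
  (d : pt -> pt -> R)
  (hd : forall p q, is_inf (Dset alpha p q) (d p q))
  (hdist : is_distance d) :
  forall (p : pt) (r : R), euclid_convex (fun q => d q p <= r).
Proof.
  destruct hdist as [_ [_ [Hsym _]]].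
  intros p r q q' t Hq Hq' Ht.
  rewrite Hsym in Hq, Hq' |- *.
  assert (Hball : forall w, d p w <= r -> forall s, r < s -> Dset alpha p w s).
  { intros w Hw s Hs.
    apply (is_inf_upward_lt _ (d p w)); [apply hd | apply Dset_le | lra]. }
  apply Rle_of_forall_gt; intros s Hs.
  apply (proj1 (hd p (comb t q q'))).
  apply Dset_comb; auto.
Qed.
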